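(* If $p,q\in\mathbf P(S)$ for a DRC-semigroup $S$, and $pq=qp$, then (i) the meet $p\wedge q$ exists in the poset $(\mathbf P(S),\le)$ and $p\wedge q=pq=qp$; (ii) $p\,\mathscr F\,q\iff p=q$.
   Context: A DRC-semigroup is $(S,\cdot,D,R)$, $(S,\cdot)$ a semigroup, $D,R:S\to S$ with, for all $a,b$: $D(a)a=a$, $aR(a)=a$; $D(ab)=D(aD(b))$, $R(ab)=R(R(a)b)$; $D(ab)=D(a)D(ab)D(a)$, $R(ab)=R(b)R(ab)R(b)$; $R(D(a))=D(a)$, $D(R(a))=R(a)$. $\mathbf P(S)=\{D(a):a\in S\}$, partially ordered by $p\le q\iff p=pq=qp$. For $p,q\in\mathbf P(S)$: $q\theta_p=R(qp)$, $q\delta_p=D(pq)$, and $p\,\mathscr F\,q$ means $p=q\delta_p$ and $q=p\theta_q$. *)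

Record DRCSemigroup := {
  carrier :> Type;
  mul : carrier -> carrier -> carrier;
  Dop : carrier -> carrier;
  Rop : carrier -> carrier;
  mul_assoc : forall a b c, mul a (mul b c) = mul (mul a b) c;
  D_left : forall a, mul (Dop a) a = a;
  R_right : forall a, mul a (Rop a) = a;
  D_mul : forall a b, Dop (mul a b) = Dop (mul a (Dop b));
  R_mul : forall a b, Rop (mul a b) = Rop (mul (Rop a) b);
  D_sandwich : forall a b, Dop (mul a b) = mul (mul (Dop a) (Dop (mul a b))) (Dop a);
  R_sandwich : forall a b, Rop (mul a b) = mul (mul (Rop b) (Rop (mul a b))) (Rop b);
  RD : forall a, Rop (Dop a) = Dop a;
  DR : forall a, Dop (Rop a) = Rop a
}.

Section Defs.
Variable S : DRCSemigroup.
Local Notation "x * y" := (mul S x y).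

Definition is_proj (p : S) : Prop := exists a : S, p = Dop S a.

Definition ple (p q : S) : Prop := p = p * q /\ p = q * p.

(** q theta_p = R(qp), q delta_p = D(pq). *)
Definition theta (q p : S) : S := Rop S (q * p).
Definition delta (q p : S) : S := Dop S (p * q).

Definition Frel (p q : S) : Prop := p = delta q p /\ q = theta p q.

Definition is_meet (p q m : S) : Prop :=
  is_proj m /\ ple m p /\ ple m q /\
  (forall r : S, is_proj r -> ple r p -> ple r q -> ple r m).
End Defs.

From Stdlib Require Import Setoid.

(* For commuting projections p, q the sandwich axioms give D(pq) = p D(pq) p = q D(pq) q,
   hence D(pq) = (pq) D(pq) (pq) = (pq)(pq) = pq, and dually R(pq) = pq.  So pq is a
   projection, necessarily the meet of p and q; and p F q reads p = D(pq) = pq = R(pq) = q. *)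

Section CommutingProjections.

Variable S : DRCSemigroup.
Local Notation "x * y" := (mul S x y).
Local Notation D := (Dop S).
Local Notation R := (Rop S).

Lemma proj_D (p : S) : is_proj S p -> D p = p.
Proof.
  intros [a ->]. rewrite <- (RD S a) at 1. rewrite DR. apply RD.
Qed.

Lemma proj_R (p : S) : is_proj S p -> R p = p.
Proof.
  intros [a ->]. apply RD.
Qed.

Lemma proj_mulxx (p : S) : is_proj S p -> p * p = p.
Proof.
  intros Hp. rewrite <- (proj_R p Hp) at 2. apply R_right.
Qed.

Lemma proj_D_mull (p a : S) : is_proj S p -> D (p * a) = p * D (p * a) * p.
Proof.
  intros Hp. rewrite D_sandwich at 1. now rewrite proj_D.
Qed.

Lemma proj_R_mulr (a p : S) : is_proj S p -> R (a * p) = p * R (a * p) * p.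
Proof.
  intros Hp. rewrite R_sandwich at 1. now rewrite proj_R.
Qed.

Section Commuting.

Variables p q : S.
Hypothesis proj_p : is_proj S p.
Hypothesis proj_q : is_proj S q.
Hypothesis pq_comm : p * q = q * p.

Lemma mulxx_comm : p * q * (p * q) = p * q.
Proof.
  rewrite mul_assoc, <- (mul_assoc S p q p), <- pq_comm.
  now rewrite mul_assoc, proj_mulxx, <- mul_assoc, proj_mulxx.
Qed.

Lemma sandwich_comm (x : S) : x = p * x * p -> x = q * x * q -> x = p * q * x * (p * q).
Proof.
  intros Hxp Hxq.
  rewrite Hxp at 1. rewrite Hxq at 1. rewrite pq_comm at 2.
  now rewrite !mul_assoc.
Qed.

Lemma D_mul_comm : D (p * q) = p * q.
Proof.
  assert (Hq : D (p * q) = q * D (p * q) * q)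
    by (rewrite pq_comm; apply proj_D_mull; exact proj_q).
  rewrite (sandwich_comm _ (proj_D_mull p q proj_p) Hq).
  now rewrite <- mul_assoc, D_left, mulxx_comm.
Qed.

Lemma R_mul_comm : R (p * q) = p * q.
Proof.
  assert (Hp : R (p * q) = p * R (p * q) * p)
    by (rewrite pq_comm; apply proj_R_mulr; exact proj_p).
  rewrite (sandwich_comm _ Hp (proj_R_mulr p q proj_q)).
  now rewrite R_right, mulxx_comm.
Qed.

Lemma proj_mul_comm : is_proj S (p * q).
Proof.
  exists (p * q). symmetry. exact D_mul_comm.
Qed.

Lemma ple_mull : ple S (p * q) p.
Proof.
  split.
  - now rewrite <- mul_assoc, <- pq_comm, mul_assoc, proj_mulxx.
  - now rewrite mul_assoc, proj_mulxx.
Qed.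

Lemma ple_mulr : ple S (p * q) q.
Proof.
  split.
  - now rewrite <- mul_assoc, proj_mulxx.
  - now rewrite pq_comm at 2; rewrite mul_assoc, proj_mulxx.
Qed.

Lemma is_meet_mul_comm : is_meet S p q (p * q).
Proof.
  split; [exact proj_mul_comm | split; [exact ple_mull | split; [exact ple_mulr |]]].
  intros r _ [rp pr] [rq qr]. split.
  - now rewrite mul_assoc, <- rp.
  - now rewrite <- mul_assoc, <- qr.
Qed.

Lemma Frel_comm_eq : Frel S p q -> p = q.
Proof.
  unfold Frel, delta, theta. rewrite D_mul_comm, R_mul_comm.
  intros [Hp Hq]. rewrite Hq. exact Hp.
Qed.

End Commuting.

Lemma Frel_refl (p : S) : is_proj S p -> Frel S p p.
Proof.
  intros Hp. unfold Frel, delta, theta.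
  now rewrite proj_mulxx, proj_D, proj_R.
Qed.

End CommutingProjections.

Theorem corollary10p2 (S : DRCSemigroup) (p q : S) :
  is_proj S p -> is_proj S q -> mul S p q = mul S q p ->
  (is_meet S p q (mul S p q) /\ is_meet S p q (mul S q p)) /\
  (Frel S p q <-> p = q).
Proof.
  intros Hp Hq Hpq.
  split; [split |].
  - now apply is_meet_mul_comm.
  - rewrite <- Hpq. now apply is_meet_mul_comm.
  - split.
    + now apply Frel_comm_eq.
    + intros <-. now apply Frel_refl.
Qed.
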